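(* Let $L_1,L_2$ be disjoint first-order languages without function symbols, each containing at least one constant symbol, let $T_1,T_2$ be an $L_1$-theory and an $L_2$-theory, and let $T_{\mathrm{sim}}$ be the theory of simple products of $T_1$ and $T_2$. Then $T_{\mathrm{sim}}$ is NIP if and only if both $T_1$ and $T_2$ are NIP.
   Context: Language of simple product $L_{\mathrm{sim}}$: constant symbols $C_{(c_1,c_2)}$ for each pair of constants $c_1\in L_1$, $c_2\in L_2$ (and no others); predicate symbols: those of $L_1$, those of $L_2$, and two binary predicates $\sim_1,\sim_2$. $T_\times$ states: $\sim_1,\sim_2$ are equivalence relations; $\forall x\forall y((x\sim_1y)\wedge(x\sim_2y)\to x=y)$; $\forall x\forall y\exists z((x\sim_1z)\wedge(y\sim_2z))$. $\bar x\sim_k\bar y$ means $\bigwedge_i x_i\sim_k y_i$. Standard conversion $\widetilde\phi$ of an $L_k$-formula $\phi$: first rewrite atomic formulas $R(\bar t)$ containing constants as $\exists\bar y(R(\bar y)\wedge\bigwedge_i t_i=y_i)$; equality of variables $x=y$ becomes $x\sim_k y$; equality involving a constant $c$ of $L_k$ is rewritten using $\sim_k$ and $C_{(c,d)}$ (if $k=1$) or $C_{(d,c)}$ (if $k=2$), $d$ a fixed constant of the other language; $R(\bar x)$ with $R\in L_k$ stays the same; the conversion commutes with Boolean connectives and $\exists$. $T_{\mathrm{sim}}$ consists of $T_\times$, all $\widetilde\sigma$ for $\sigma\in T_1\cup T_2$, and for each $k$ and each predicate $R\in L_k$ the sentence $\forall\bar x\forall\bar y((\bar x\sim_k\bar y)\to(R(\bar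 x)\leftrightarrow R(\bar y)))$. A formula $\phi(\bar x;\bar y)$ has IP in a theory $T$ if in some model of $T$ there are $(\bar a_i)_{i<\omega}$ and $(\bar b_I)_{I\subseteq\omega}$ with $\models\phi(\bar a_i;\bar b_I)\iff i\in I$; $T$ is NIP if no formula has IP. *)

From mathcomp Require Import all_boot.
Unset Printing Implicit Defensive.

Record lang := Lang {
  const : Type;
  psym : Type;
  arity : psym -> nat }.
Arguments arity {l} _.

Inductive term (C : Type) :=
| TVar : nat -> term C
| TConst : C -> term C.
Arguments TVar {C}.
Arguments TConst {C}.

Inductive formula (L : lang) :=
| FEq : term (const L) -> term (const L) -> formula L
| FAtom (R : psym L) : ('I_(arity R) -> term (const L)) -> formula L
| FNeg : formula L -> formula L
| FAnd : formula L -> formula L -> formula L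
| FEx : nat -> formula L -> formula L.
Arguments FEq {L}.
Arguments FAtom {L}.
Arguments FNeg {L}.
Arguments FAnd {L}.
Arguments FEx {L}.

Definition FOr {L} (p q : formula L) := FNeg (FAnd (FNeg p) (FNeg q)).
Definition FImp {L} (p q : formula L) := FOr (FNeg p) q.
Definition FIff {L} (p q : formula L) := FAnd (FImp p q) (FImp q p).
Definition FAll {L} (x : nat) (p : formula L) := FNeg (FEx x (FNeg p)).

Definition term_var {C} (t : term C) (x : nat) : Prop :=
  match t with TVar y => y = x | TConst _ => False end.

Fixpoint free_in {L} (x : nat) (p : formula L) : Prop :=
  match p with
  | FEq t u => term_var t x \/ term_var u x
  | FAtom R ts => exists i, term_var (ts i) x
  | FNeg q => free_in x q
  | FAnd q r => free_in x q \/ free_in x r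
  | FEx y q => y <> x /\ free_in x q
  end.

Definition sentence {L} (p : formula L) : Prop := forall x, ~ free_in x p.

Record structure (L : lang) := Structure {
  carrier :> Type;
  iconst : const L -> carrier;
  ipred : forall R : psym L, ('I_(arity R) -> carrier) -> Prop }.
Arguments iconst {L} _ _.
Arguments ipred {L} _ _ _.

Definition eval {L} (M : structure L) (v : nat -> M) (t : term (const L)) : M :=
  match t with TVar x => v x | TConst c => iconst M c end.

Definition upd {A} (v : nat -> A) (x : nat) (a : A) : nat -> A :=
  fun y => if y == x then a else v y.

Fixpoint sat {L} (M : structure L) (v : nat -> M) (p : formula L) : Prop :=
  match p with
  | FEq t u => eval M v t = eval M v u
  | FAtom R ts => ipred M R (fun i => eval M v (ts i))
  | FNeg q => ~ sat M v q
  | FAnd q r => sat M v q /\ sat M v r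
  | FEx x q => exists a : M, sat M (upd v x a) q
  end.

Definition theory (L : lang) := formula L -> Prop.

Definition model_of {L} (M : structure L) (T : theory L) : Prop :=
  forall p, T p -> forall v : nat -> M, sat M v p.

Definition consistent {L} (T : theory L) : Prop :=
  exists M : structure L, model_of M T.

(* phi(x;y) : xs is the (finite) set of object variables x, all remaining
   (free) variables are parameter variables y.  The assignment for the pair
   (a_i, b_I) takes the x-variables from a_i and the others from b_I. *)
Definition mix {A} (xs : seq nat) (a b : nat -> A) : nat -> A :=
  fun k => if k \in xs then a k else b k.

Definition has_IP {L} (T : theory L) (p : formula L) (xs : seq nat) : Prop :=
  exists M : structure L, model_of M T /\
  exists (a : nat -> (nat -> M)) (b : (nat -> Prop) -> (nat -> M)),
    forall (i : nat) (I : nat -> Prop), sat M (mix xs (a i) (b I)) p <-> I i.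

Definition NIP {L} (T : theory L) : Prop :=
  forall (p : formula L) (xs : seq nat), ~ has_IP T p xs.

Section SimpleProduct.
Variables L1 L2 : lang.

Inductive sim_pred :=
| SP1 : psym L1 -> sim_pred
| SP2 : psym L2 -> sim_pred
| Sim1 : sim_pred
| Sim2 : sim_pred.

Definition sim_arity (p : sim_pred) : nat :=
  match p with SP1 R => arity R | SP2 R => arity R | Sim1 => 2 | Sim2 => 2 end.

Definition Lsim : lang := @Lang (const L1 * const L2)%type sim_pred sim_arity.

Definition pair_fun (t u : term (const Lsim)) : 'I_2 -> term (const Lsim) :=
  fun i => if val i == 0 then t else u.

Definition fsim1 (t u : term (const Lsim)) : formula Lsim :=
  FAtom (Sim1 : psym Lsim) (pair_fun t u).
Definition fsim2 (t u : term (const Lsim)) : formula Lsim :=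
  FAtom (Sim2 : psym Lsim) (pair_fun t u).

Definition is_const {C} (t : term C) : bool :=
  if t is TConst _ then true else false.
Definition var_index {C} (t : term C) : nat :=
  if t is TVar x then x else 0.

Definition exs (ys : seq nat) (p : formula Lsim) : formula Lsim :=
  foldr FEx p ys.

Definition tr1 (d : const L2) (t : term (const L1)) : term (const Lsim) :=
  match t with TVar x => TVar x | TConst c => TConst (c, d) end.

Fixpoint conv1 (d : const L2) (p : formula L1) : formula Lsim :=
  match p with
  | FEq t u => fsim1 (tr1 d t) (tr1 d u)
  | FAtom R ts =>
      let n := arity R in
      if [exists i, is_const (ts i)] then
        (* R(t) ~> exists y (R(y) /\ /\_i tr(t_i) ~1 y_i), y fresh *)
        let N := (\max_(i < n) var_index (ts i)).+1 in
        exs [seq N + j | j <- iota 0 n]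
          (foldr FAnd
             (FAtom (SP1 R : psym Lsim) (fun i : 'I_n => TVar (N + i)))
             [seq fsim1 (tr1 d (ts i)) (TVar (N + i)) | i <- enum 'I_n])
      else FAtom (SP1 R : psym Lsim) (fun i : 'I_n => tr1 d (ts i))
  | FNeg q => FNeg (conv1 d q)
  | FAnd q r => FAnd (conv1 d q) (conv1 d r)
  | FEx x q => FEx x (conv1 d q)
  end.

Definition tr2 (d : const L1) (t : term (const L2)) : term (const Lsim) :=
  match t with TVar x => TVar x | TConst c => TConst (d, c) end.

Fixpoint conv2 (d : const L1) (p : formula L2) : formula Lsim :=
  match p with
  | FEq t u => fsim2 (tr2 d t) (tr2 d u)
  | FAtom R ts =>
      let n := arity R in
      if [exists i, is_const (ts i)] then
        let N := (\max_(i < n) var_index (ts i)).+1 in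
        exs [seq N + j | j <- iota 0 n]
          (foldr FAnd
             (FAtom (SP2 R : psym Lsim) (fun i : 'I_n => TVar (N + i)))
             [seq fsim2 (tr2 d (ts i)) (TVar (N + i)) | i <- enum 'I_n])
      else FAtom (SP2 R : psym Lsim) (fun i : 'I_n => tr2 d (ts i))
  | FNeg q => FNeg (conv2 d q)
  | FAnd q r => FAnd (conv2 d q) (conv2 d r)
  | FEx x q => FEx x (conv2 d q)
  end.

Definition alls (xs : seq nat) (p : formula Lsim) : formula Lsim :=
  foldr FAll p xs.

Definition v (x : nat) : term (const Lsim) := TVar x.

Fixpoint inP {A} (a : A) (s : seq A) : Prop :=
  match s with [::] => False | b :: s' => a = b \/ inP a s' end.

Definition equiv_axioms (s : term (const Lsim) -> term (const Lsim) -> formula Lsim)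
  : seq (formula Lsim) :=
  [:: FAll 0 (s (v 0) (v 0));
      alls [:: 0; 1] (FImp (s (v 0) (v 1)) (s (v 1) (v 0)));
      alls [:: 0; 1; 2] (FImp (FAnd (s (v 0) (v 1)) (s (v 1) (v 2))) (s (v 0) (v 2)))].

Definition Tx_axioms : seq (formula Lsim) :=
  equiv_axioms fsim1 ++ equiv_axioms fsim2 ++
  [:: alls [:: 0; 1] (FImp (FAnd (fsim1 (v 0) (v 1)) (fsim2 (v 0) (v 1)))
                          (FEq (v 0) (v 1)));
      alls [:: 0; 1] (FEx 2 (FAnd (fsim1 (v 0) (v 2)) (fsim2 (v 1) (v 2))))].

(* forall x forall y (x ~k y -> (R(x) <-> R(y))), x_i = i, y_i = n + i *)
Definition invariance (s : term (const Lsim) -> term (const Lsim) -> formula Lsim)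
  (R : psym Lsim) : formula Lsim :=
  let n := arity R in
  alls (iota 0 (n + n))
    (FImp (foldr FAnd (FEq (v 0) (v 0)) [seq s (v i) (v (n + i)) | i <- iota 0 n])
          (FIff (FAtom R (fun i : 'I_n => v i)) (FAtom R (fun i : 'I_n => v (n + i))))).

Definition Tsim (d1 : const L1) (d2 : const L2) (T1 : theory L1) (T2 : theory L2)
  : theory Lsim :=
  fun p =>
    inP p Tx_axioms
    \/ (exists s, T1 s /\ p = conv1 d2 s)
    \/ (exists s, T2 s /\ p = conv2 d1 s)
    \/ (exists R : psym L1, p = invariance fsim1 (SP1 R : psym Lsim))
    \/ (exists R : psym L2, p = invariance fsim2 (SP2 R : psym Lsim)).

End SimpleProduct.
Arguments Tsim {L1 L2} _ _ _ _.

(* If an L1-formula has IP in a model M1 of T1, its standard conversion has IP in the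
   product M1 x M2 with any model M2 of T2, which is a model of T_sim; symmetrically for
   L2.  Conversely, a model M of T_sim is the product of its quotients M/~1 and M/~2,
   which are models of T1 and T2.  Once its constants are traded for parameters, an
   L_sim-formula is equivalent in M to a finite disjunction of conjunctions
   phi1(x/~1) /\ phi2(x/~2) (Feferman-Vaught).  If it has IP, this Boolean combination
   shatters arbitrarily large finite sets, so by a Sauer-Shelah count (through Pajor's
   lemma) one of the components phi_k does so in M/~k, and an ultrapower of M/~k turns
   these finite patterns into an infinite IP pattern. *)

From mathcomp Require Import all_boot zify.
From mathcomp Require Import boolp filter.
From Stdlib Require Import RelationClasses.

Set Implicit Arguments.
Unset Strict Implicit.
Unset Printing Implicit Defensive.

Section PropQuotient.
Variables (A : Type) (E : A -> A -> Prop).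

Definition quot := {P : A -> Prop | exists x, P = E x}.
Definition cls (x : A) : quot := exist _ (E x) (ex_intro _ x erefl).
Definition rep (q : quot) : A := sval (cid (svalP q)).

Lemma cls_rep q : cls (rep q) = q.
Proof. by case: q => P HP; rewrite /rep /cls; case: cid => /= x Px; apply: eq_exist. Qed.

Hypothesis E_equiv : Equivalence E.

Lemma eq_cls x y : cls x = cls y <-> E x y.
Proof.
split=> [/(congr1 sval) /= ->|Exy]; first by reflexivity.
apply: eq_exist; apply/funext => z; apply/propext.
by split; apply: transitivity; [symmetry|].
Qed.

Lemma rep_cls x : E (rep (cls x)) x.
Proof. by apply/eq_cls; rewrite cls_rep. Qed.

Definition quotient_structure {L : lang} (c : const L -> A)
    (P : forall R : psym L, ('I_(arity R) -> A) -> Prop) : structure L :=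
  @Structure L quot (fun k => cls (c k)) (fun R f => P R (fun i => rep (f i))).

Lemma quotient_ipred {L : lang} c P (R : psym L) (f : 'I_(arity R) -> A) :
  (forall g h, (forall i, E (g i) (h i)) -> P R g -> P R h) ->
  ipred (quotient_structure c P) R (fun i => cls (f i)) <-> P R f.
Proof.
move=> P_inv; split; apply: P_inv => i; first exact: rep_cls.
by symmetry; apply: rep_cls.
Qed.

End PropQuotient.

Section Pajor.
Context {T : finType}.
Implicit Types (F : {set {set T}}) (A B C : {set T}).

Definition shattered_by F : {set {set T}} :=
  [set A : {set T} | [forall B : {set T}, (B \subset A) ==> [exists C in F, C :&: A == B]]].

Lemma shattered_byP F A :
  reflect (forall B, B \subset A -> exists2 C, C \in F & C :&: A = B)
          (A \in shattered_by F).
Proof.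
rewrite inE; apply: (iffP forallP) => [sh B sBA|sh B].
  by have /existsP[C /andP[FC /eqP]] := implyP (sh B) sBA; exists C.
apply/implyP=> /sh[C FC CA]; apply/existsP; exists C; by rewrite FC CA /=.
Qed.

Lemma shattered_by_mono F1 F2 : F1 \subset F2 -> shattered_by F1 \subset shattered_by F2.
Proof.
move=> sF12; apply/subsetP=> A /shattered_byP shA; apply/shattered_byP=> B /shA[C F1C CA].
by exists C; first exact: subsetP F1C.
Qed.

Lemma notin_shattered_by F x A :
  {in F &, forall C1 C2, (x \in C1) = (x \in C2)} -> A \in shattered_by F -> x \notin A.
Proof.
move=> agree /shattered_byP shA; apply/negP=> xA.
have [C1 FC1 C1A] := shA [set x] (etrans (sub1set _ _) xA).
have [C2 FC2 C2A] := shA set0 (sub0set A).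
have := agree C1 C2 FC1 FC2.
have -> : x \in C1 by have := set11 x; rewrite -C1A inE => /andP[].
by have := in_set0 x; rewrite -C2A inE xA andbT => ->.
Qed.

Section Split.
Variables (F : {set {set T}}) (x : T).
Let F1 := F :&: [set C : {set T} | x \in C].
Let F0 := F :\: [set C : {set T} | x \in C].

Lemma setU1_shattered_by A :
  A \in shattered_by F0 -> A \in shattered_by F1 -> x |: A \in shattered_by F.
Proof.
move=> /shattered_byP sh0 /shattered_byP sh1; apply/shattered_byP => B sBxA.
have [xB|xNB] := boolP (x \in B).
- have [|C] := sh1 (B :\ x).
    by apply/subsetP=> y /setD1P[yx /(subsetP sBxA)]; rewrite !inE (negbTE yx).
  rewrite !inE => /andP[FC xC] CA; exists C => //; apply/setP=> y.
  have [->|yx] := eqVneq y x; first by rewrite !inE xB xC eqxx.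
  by move/setP: CA => /(_ y); rewrite !inE (negbTE yx).
- have [|C] := sh0 B.
    apply/subsetP=> y yB; have := subsetP sBxA y yB; rewrite !inE.
    by case: eqP yB xNB => [->|] // ->.
  rewrite !inE => /andP[xNC FC] CA; exists C => //; apply/setP=> y.
  have [->|yx] := eqVneq y x; first by rewrite !inE (negbTE xNC) (negbTE xNB).
  by move/setP: CA => /(_ y); rewrite !inE (negbTE yx).
Qed.

Lemma card_shattered_by_split :
  #|shattered_by F0| + #|shattered_by F1| <= #|shattered_by F|.
Proof.
set S0 := shattered_by F0; set S1 := shattered_by F1.
have xNS : {in S0 :|: S1, forall A, x \notin A}.
  move=> A /setUP[]; apply: notin_shattered_by => C1 C2; rewrite !inE.
    by case/andP=> /negbTE -> _ /andP[/negbTE ->].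
  by case/andP=> _ -> /andP[_ ->].
have inj : {in S0 :&: S1 &, injective (fun A : {set T} => x |: A)}.
  move=> A1 A2 /setIP[A1S _] /setIP[A2S _] eqA; apply/setP=> y.
  move/setP: eqA => /(_ y); rewrite !inE; have [->|//] := eqVneq y x.
  by rewrite !(negbTE (xNS _ _)) // inE ?A1S ?A2S.
set img := [set x |: A | A in S0 :&: S1].
have disj : (S0 :|: S1) :&: img = set0.
  apply/setP=> B; rewrite in_setI in_set0; apply/andP=> -[/xNS + /imsetP[A _ eqB]].
  by rewrite eqB setU11.
have sub : (S0 :|: S1) :|: img \subset shattered_by F.
  apply/subsetP=> B /setUP[/setUP[]|/imsetP[A /setIP[A0 A1] ->]].
  - by apply/subsetP; apply: shattered_by_mono; apply: subsetDl.
  - by apply/subsetP; apply: shattered_by_mono; apply: subsetIl.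
  - exact: setU1_shattered_by.
rewrite -cardsUI -(card_in_imset inj); have := cardsUI (S0 :|: S1) img.
rewrite disj cards0 addn0 => <-; exact: subset_leq_card.
Qed.

End Split.

Lemma card_le_shattered_by F : #|F| <= #|shattered_by F|.
Proof.
elim: #|F| {-2}F (leqnn #|F|) => [|n IH] {}F leFn.
  by move: leFn; rewrite leqn0 => /eqP ->.
have [le1|] := leqP #|F| 1.
  have [->|/card_gt0P[C FC]] := posnP #|F|; first by [].
  apply: leq_trans le1 _; apply/card_gt0P; exists set0; apply/shattered_byP=> B.
  by rewrite subset0 => /eqP ->; exists C; rewrite ?setI0.
case/card_gt1P=> [C1 [C2 [FC1 FC2 C12]]].
have [x Cx] : exists x, (x \in C1) != (x \in C2).
  by apply/existsP; apply: contraNT C12 => /existsPn eqC; apply/eqP/setP=> y; apply/eqP/negPn.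
have [Cin [Cout [FCin FCout xCin xNCout]]] :
    exists Cin Cout, [/\ Cin \in F, Cout \in F, x \in Cin & x \notin Cout].
  move: Cx; case xC1: (x \in C1); case xC2: (x \in C2) => // _.
    by exists C1, C2; rewrite xC1 xC2.
  by exists C2, C1; rewrite xC1 xC2.
set X := [set C : {set T} | x \in C].
have F1pos : 0 < #|F :&: X| by apply/card_gt0P; exists Cin; rewrite !inE FCin.
have F0pos : 0 < #|F :\: X| by apply/card_gt0P; exists Cout; rewrite !inE FCout xNCout.
have cardF := cardsID X F.
rewrite -cardF addnC; apply: leq_trans (card_shattered_by_split F x).
apply: leq_add; apply: IH; rewrite -ltnS; apply: leq_trans leFn; rewrite -cardF.
  by rewrite -add1n leq_add2r.
by rewrite -addn1 leq_add2l.
Qed.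

End Pajor.

Lemma card_small_sets N d : #|[set A : {set 'I_N} | #|A| < d]| <= N.+1 ^ d.
Proof.
pose code (A : {set 'I_N}) := [ffun j : 'I_d => nth None (map Some (enum A)) j].
have codeP (A : {set 'I_N}) : #|A| < d -> forall i, (i \in A) = [exists j, code A j == Some i].
  move=> ltAd i; apply/idP/existsP => [iA|[j]].
    have lt_id : index i (enum A) < d.
      by apply: leq_trans ltAd; rewrite ltnS cardE ltnW // index_mem mem_enum.
    exists (Ordinal lt_id); rewrite ffunE /= (nth_map i) ?index_mem ?mem_enum //.
    by rewrite nth_index ?mem_enum.
  rewrite ffunE; case: (ltnP j (size (enum A))) => ltj.
    by rewrite (nth_map i) // => /eqP [<-]; rewrite -mem_enum mem_nth.
  by rewrite nth_default // size_map.
have code_inj : {in [set A : {set 'I_N} | #|A| < d] &, injective code}.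
  move=> A B; rewrite !inE => ltA ltB eqAB; apply/setP => i.
  by rewrite (codeP A ltA) (codeP B ltB) eqAB.
rewrite -(card_in_imset code_inj); apply: leq_trans (max_card _) _.
by rewrite card_ffun card_option !card_ord.
Qed.

Lemma exp2_gt_poly K : exists N, N.+1 ^ K < 2 ^ N.
Proof.
(* N := 2 ^ m with m := 2K + 2, so that N.+1 ^ K <= 2 ^ (m.+1 * K) < 2 ^ N. *)
set m := (K + K).+2.
have lt_mK : m.+1 * K < 2 ^ m.
  have eq_m : 2 ^ m = 2 ^ K * 2 ^ K * 4 by rewrite /m 2!expnS expnD; nia.
  have := ltn_expl K (ltnSn 1); rewrite eq_m /m; nia.
exists (2 ^ m); apply: leq_ltn_trans (_ : _ <= (2 ^ m.+1) ^ K) _.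
  have [->|K_gt0] := posnP K; first by [].
  by rewrite leq_exp2r // expnS; nia.
by rewrite -expnM ltn_exp2l // mulnC.
Qed.

Section Shattering.
Variable X : Type.
Implicit Types (f g : nat -> X -> Prop) (S : seq nat).

Definition shatters f S :=
  forall J : nat -> Prop, exists x, {in S, forall s, f s x <-> J s}.

Definition infinite_VC f := forall n, exists S, [/\ uniq S, size S = n & shatters f S].

Lemma shatters_sub f S1 S2 : {subset S1 <= S2} -> shatters f S2 -> shatters f S1.
Proof. by move=> sS12 shS J; have [x Hx] := shS J; exists x => s /sS12; apply: Hx. Qed.

Lemma infinite_VC_ext f g :
  (forall s x, f s x <-> g s x) -> infinite_VC f -> infinite_VC g.
Proof.
move=> fg VCf n; have [S [uS sS shS]] := VCf n; exists S; split=> // J.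
by have [x Hx] := shS J; exists x => s Ss; rewrite -fg; apply: Hx.
Qed.

Lemma not_infinite_VC_False : ~ infinite_VC (fun _ _ => False).
Proof.
move=> /(_ 1)[S [_ sS /(_ (fun _ => True))[x Hx]]].
have [s Ss] : exists s, s \in S by case: S sS {Hx} => // s S' _; exists s; apply: mem_head.
by have [_ /(_ I)] := Hx s Ss.
Qed.

Lemma finite_VC_bound f :
  ~ infinite_VC f -> exists d, forall S, uniq S -> size S = d -> ~ shatters f S.
Proof.
move=> nVC; apply: contrapT => nd; apply: nVC => n; apply: contrapT => nS.
by apply: nd; exists n => S uS sS shS; apply: nS; exists S.
Qed.

Definition trace f S x : {set 'I_(size S)} := [set i : 'I_(size S) | `[< f (nth 0 S i) x >] ].
Definition traces f S : {set {set 'I_(size S)}} :=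
  [set A | `[< exists x, trace f S x = A >] ].

Lemma shatters_traces f S : uniq S -> shatters f S -> traces f S = setT.
Proof.
move=> uS shS; apply/setP=> A; rewrite !inE; apply/asboolP.
have [x Hx] := shS (fun s => exists2 j : 'I_(size S), j \in A & nth 0 S j = s).
exists x; apply/setP=> i; rewrite inE; apply/asboolP/idP; rewrite Hx ?mem_nth //.
  by case=> j jA /eqP; rewrite nth_uniq // => /eqP/val_inj <-.
by exists i.
Qed.

Lemma shattered_by_traces f S A :
  A \in shattered_by (traces f S) -> shatters f [seq nth 0 S i | i : 'I_(size S) <- enum A].
Proof.
move=> /shattered_byP shA J.
have [|_ /[!inE] /asboolP[x <-] eqB] := shA [set i in A | `[< J (nth 0 S i) >] ].
  by apply/subsetP=> i; rewrite inE => /andP[].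
exists x => s /mapP[i]; rewrite mem_enum => iA ->.
move/setP: eqB => /(_ i); rewrite !inE iA andbT.
by move/(congr1 is_true); rewrite !asboolE => ->.
Qed.

Lemma card_traces f d S :
  uniq S -> (forall S', uniq S' -> size S' = d -> ~ shatters f S') ->
  #|traces f S| <= (size S).+1 ^ d.
Proof.
move=> uS noshat; apply: leq_trans (card_le_shattered_by _) _.
apply: leq_trans (card_small_sets _ d); apply: subset_leq_card.
apply/subsetP=> A shA; rewrite inE ltnNge; apply/negP=> leDA.
apply: (noshat (take d [seq nth 0 S i | i : 'I_(size S) <- enum A])).
- apply/take_uniq; rewrite map_inj_uniq ?enum_uniq // => i j /eqP.
  by rewrite nth_uniq // => /eqP/val_inj.
- by rewrite size_takel // size_map -cardE.
- by apply: shatters_sub (shattered_by_traces shA) => s; apply: mem_take.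
Qed.

(* On N points, the traces of [op f g] are determined by pairs of traces of [f] and [g];
   if both had finite VC dimension there would be at most (N+1)^(df+dg) < 2^N of them. *)
Lemma infinite_VC_combine (op : Prop -> Prop -> Prop) f g :
  infinite_VC (fun s x => op (f s x) (g s x)) -> infinite_VC f \/ infinite_VC g.
Proof.
move=> VCh; apply: contrapT => /not_orP[/finite_VC_bound[df nf] /finite_VC_bound[dg ng]].
have [N ltN] := exp2_gt_poly (df + dg).
have [S [uS sS shS]] := VCh N.
pose combine (p : {set 'I_(size S)} * {set 'I_(size S)}) :=
  [set i | `[< op (i \in p.1) (i \in p.2) >] ].
have all_combined : setT \subset combine @: setX (traces f S) (traces g S).
  apply/subsetP=> A; rewrite -(shatters_traces uS shS) inE => /asboolP[x <-].
  apply/imsetP; exists (trace f S x, trace g S x).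
    by rewrite inE; apply/andP; split; rewrite inE; apply/asboolP; exists x.
  by apply/setP=> i; rewrite !inE !asboolE.
move: ltN; rewrite -sS ltnNge => /negP; apply.
have card_all : #|[set: {set 'I_(size S)}]| = 2 ^ size S.
  by rewrite -powersetT card_powerset cardsT card_ord.
rewrite -card_all expnD.
apply: leq_trans (subset_leq_card all_combined) _.
apply: leq_trans (leq_imset_card _ _) _; rewrite cardsX.
by apply: leq_mul; [apply: card_traces nf|apply: card_traces ng].
Qed.

End Shattering.

Lemma comp_upd (A B : Type) (f : A -> B) (e : nat -> A) x a :
  f \o upd e x a = upd (f \o e) x (f a).
Proof. by apply/funext=> k; rewrite /upd /=; case: eqP. Qed.

Lemma upd_id (A : Type) (e : nat -> A) x : upd e x (e x) = e.
Proof. by apply/funext=> k; rewrite /upd; case: eqP => [->|]. Qed.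

Lemma comp_mix (A B : Type) (f : A -> B) xs (a b : nat -> A) :
  f \o mix xs a b = mix xs (f \o a) (f \o b).
Proof. by apply/funext=> k; rewrite /mix /=; case: ifP. Qed.

Section Semantics.
Variables (L : lang) (M : structure L).
Implicit Types (e : nat -> M) (p q : formula L).

Lemma sat_FAnd e p q : sat M e (FAnd p q) = (sat M e p /\ sat M e q).
Proof. by []. Qed.

Lemma sat_FEx e x p : sat M e (FEx x p) = exists a, sat M (upd e x a) p.
Proof. by []. Qed.

Lemma sat_FAll e x p : sat M e (FAll x p) <-> forall a, sat M (upd e x a) p.
Proof. by rewrite /= -forallNP; split=> H a; [apply: contrapT (H a)|move/(_ (H a))]. Qed.

Lemma sat_FImp e p q : sat M e (FImp p q) <-> (sat M e p -> sat M e q).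
Proof. by rewrite /=; split=> [H hp|]; [apply: contrapT|]; tauto. Qed.

Lemma sat_FIff e p q : sat M e (FIff p q) <-> (sat M e p <-> sat M e q).
Proof. by rewrite /FIff; move: (sat_FImp e p q) (sat_FImp e q p) => /= -> ->. Qed.

Lemma sat_foldr_FAnd (I : eqType) (F : I -> formula L) b (s : seq I) e :
  sat M e (foldr FAnd b [seq F i | i <- s]) <->
  sat M e b /\ {in s, forall i, sat M e (F i)}.
Proof.
elim: s => [|j s IH] /=; first by split=> [|[]].
rewrite IH; split=> [[Fj [eb Fs]]|[eb Fs]].
  by split=> // i /predU1P[->|]; last apply: Fs.
by split; [apply: Fs; rewrite mem_head|split=> // i si; apply: Fs; rewrite inE si orbT].
Qed.

Lemma valid_FAll x p : (forall e, sat M e (FAll x p)) <-> forall e, sat M e p.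
Proof.
split=> valid e; last by apply/sat_FAll.
by rewrite -(upd_id e x); apply: (sat_FAll e x p).1 (valid e) (e x).
Qed.

Lemma eval_agree B e e' t :
  (forall k, k < B -> e k = e' k) -> var_index t < B -> eval M e t = eval M e' t.
Proof. by case: t => [x|c] //= ee'; apply: ee'. Qed.

End Semantics.

Definition IP_in {L : lang} (M : structure L) (p : formula L) (xs : seq nat) :=
  exists (a : nat -> nat -> M) (b : (nat -> Prop) -> nat -> M),
    forall i I, sat M (mix xs (a i) (b I)) p <-> I i.

Lemma IP_in_image (L L' : lang) (M : structure L) (M' : structure L') (f : M -> M')
    p p' xs :
  (forall e, sat M' (f \o e) p' <-> sat M e p) -> IP_in M p xs -> IP_in M' p' xs.
Proof.
move=> fp [a [b ab]]; exists (fun i => f \o a i), (fun I => f \o b I) => i I.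
by rewrite -comp_mix fp.
Qed.

Lemma IP_in_infinite_VC (L : lang) (M : structure L) p xs
    (a : nat -> nat -> M) (b : (nat -> Prop) -> nat -> M) :
  (forall i I, sat M (mix xs (a i) (b I)) p <-> I i) ->
  infinite_VC (fun s I => sat M (mix xs (a s) (b I)) p).
Proof.
move=> ab n; exists (iota 0 n); split; rewrite ?iota_uniq ?size_iota // => J.
by exists J => s _; apply: ab.
Qed.

Section FilterFacts.
Variables (T : Type) (F : (T -> Prop) -> Prop).

Lemma filter_iff {FF : Filter F} (P Q : T -> Prop) :
  F (fun x => P x <-> Q x) -> F P <-> F Q.
Proof. by move=> PQ; split; apply: filterS2 PQ => x [] //. Qed.

Lemma filter_cst {FF : ProperFilter F} (P : Prop) : F (fun _ => P) <-> P.
Proof. by split=> [|p]; [apply: filter_const|apply: filterE]. Qed.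

Lemma ultra_not {FU : UltraFilter F} (P : T -> Prop) : ~ F P <-> F (fun x => ~ P x).
Proof.
split=> [|FnP FP]; first by case: (in_ultra_setVsetC P FU).
by apply/(filter_cst False); apply: filterS2 FP FnP.
Qed.

End FilterFacts.

Section Ultrapower.
Variables (U : (nat -> Prop) -> Prop) (L : lang) (M : structure L).
Context {U_ultra : UltraFilter U}.

Definition ae_eq (f g : nat -> M) := U (fun n => f n = g n).

Lemma ae_eq_equiv : Equivalence ae_eq.
Proof.
split=> [f|f g|f g h]; rewrite /ae_eq; first exact: filterE.
  by apply: filterS => n ->.
by apply: filterS2 => n -> ->.
Qed.

Definition ultrapower : structure L :=
  quotient_structure ae_eq (fun c _ => iconst M c)
    (fun R f => U (fun n => ipred M R (fun i => f i n))).

Notation cls := (cls ae_eq).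

Lemma eval_ultrapower (G : nat -> nat -> M) t :
  eval ultrapower (cls \o G) t = cls (fun n => eval M (fun k => G k n) t).
Proof. by case: t. Qed.

Lemma los p (G : nat -> nat -> M) :
  sat ultrapower (cls \o G) p <-> U (fun n => sat M (fun k => G k n) p).
Proof.
elim: p G => [t u|R ts|q IH|q IHq r IHr|x q IH] G.
- by rewrite /= !eval_ultrapower (eq_cls ae_eq_equiv).
- change (ipred ultrapower R (fun i => eval ultrapower (cls \o G) (ts i)) <->
          U (fun n => ipred M R (fun i => eval M (fun k => G k n) (ts i)))).
  under eq_fun do rewrite eval_ultrapower.
  apply: (quotient_ipred ae_eq_equiv) => f g fg.
  have fg_ae : U (fun n => forall i, f i n = g i n) by apply: filter_forall.
  by apply: filterS2 fg_ae => n /funext ->.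
- by rewrite /= IH ultra_not.
- rewrite /= IHq IHr; split=> [[]|H]; first exact: filterS2.
  by split; apply: filterS H => n [].
- rewrite /=; split=> [[a]|H].
    rewrite -(cls_rep a) -comp_upd IH; apply: filterS => n sat_n.
    by exists (rep a n); rewrite -(comp_upd (fun g => g n)).
  have /choice[h Hh] : forall n, exists a,
      (exists b, sat M (upd (fun k => G k n) x b) q) ->
      sat M (upd (fun k => G k n) x a) q.
    move=> n; case: (pselect (exists b, sat M (upd (fun k => G k n) x b) q)).
      by case=> b; exists b.
    by exists (G 0 n).
  exists (cls h); rewrite -comp_upd IH; apply: filterS H => n /Hh.
  by rewrite -(comp_upd (fun g => g n)).
Qed.

Lemma ultrapower_model T : model_of M T -> model_of ultrapower T.
Proof.
move=> MT p Tp e; rewrite -[e](funext (fun k => cls_rep (e k))).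
by apply/los; apply: filterE => n; apply: MT.
Qed.

End Ultrapower.

Lemma infinite_VC_has_IP (L : lang) (T : theory L) (M : structure L) p xs (X : Type)
    (a : nat -> nat -> M) (b : X -> nat -> M) :
  model_of M T -> infinite_VC (fun s x => sat M (mix xs (a s) (b x)) p) ->
  has_IP T p xs.
Proof.
move=> MT VC.
have [U [U_ultra evU]] := ultraFilterLemma eventually_filter.
have [S HS] := choice VC.
have /choice[y Hy] : forall nI : nat * (nat -> Prop), exists x,
    {in S nI.1, forall s, sat M (mix xs (a s) (b x)) p <-> nI.2 (index s (S nI.1))}.
  by move=> [n I]; case: (HS n) => _ _; apply.
(* [a_i] is the class of the i-th points of the shattered sets [S n], and [b_I] realizes
   [I] on each of them; Los applies since [i < n] for almost all [n]. *)
exists (ultrapower U M); split; first exact: ultrapower_model.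
exists (fun i => cls (ae_eq (M:=M) U) \o (fun k n => a (nth 0 (S n) i) k)).
exists (fun I => cls (ae_eq (M:=M) U) \o (fun k n => b (y (n, I)) k)) => i I.
rewrite -comp_mix los; apply: (iff_trans _ (filter_cst (F:=U) (I i))); apply: filter_iff.
have ev_i : U (fun n => i < n) by apply: evU; exists i.+1.
apply: filterS ev_i => n lt_in.
have [uS sS _] := HS n.
have -> : (fun k => mix xs (fun k n => a (nth 0 (S n) i) k) (fun k n => b (y (n, I)) k) k n)
          = mix xs (a (nth 0 (S n) i)) (b (y (n, I))).
  by apply/funext=> k; rewrite /mix; case: ifP.
by rewrite Hy ?index_uniq ?mem_nth ?sS.
Qed.

Section ConstantElimination.
Variable L : lang.
Implicit Types (p q : formula L) (t : term (const L)).

Fixpoint max_var p : nat :=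
  match p with
  | FEq t u => maxn (var_index t) (var_index u)
  | FAtom R ts => \max_(i < arity R) var_index (ts i)
  | FNeg q => max_var q
  | FAnd q r => maxn (max_var q) (max_var r)
  | FEx x q => maxn x (max_var q)
  end.

Definition term_consts t : seq {classic const L} :=
  if t is TConst c then [:: c] else [::].

Fixpoint consts p : seq {classic const L} :=
  match p with
  | FEq t u => term_consts t ++ term_consts u
  | FAtom R ts => flatten [seq term_consts (ts i) | i <- enum 'I_(arity R)]
  | FNeg q => consts q
  | FAnd q r => consts q ++ consts r
  | FEx _ q => consts q
  end.

Fixpoint const_free p : bool :=
  match p with
  | FEq t u => ~~ is_const t && ~~ is_const u
  | FAtom R ts => [forall i, ~~ is_const (ts i)]
  | FNeg q => const_free q
  | FAnd q r => const_free q && const_free r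
  | FEx _ q => const_free q
  end.

Definition subst_const_term (rho : const L -> nat) t :=
  if t is TConst c then TVar (rho c) else t.

Fixpoint subst_consts (rho : const L -> nat) p : formula L :=
  match p with
  | FEq t u => FEq (subst_const_term rho t) (subst_const_term rho u)
  | FAtom R ts => FAtom R (fun i => subst_const_term rho (ts i))
  | FNeg q => FNeg (subst_consts rho q)
  | FAnd q r => FAnd (subst_consts rho q) (subst_consts rho r)
  | FEx x q => FEx x (subst_consts rho q)
  end.

Lemma const_free_subst_consts rho p : const_free (subst_consts rho p).
Proof.
elim: p => [[?|?] [?|?]|R ts|q|q IHq r IHr|x q] //=; last by rewrite IHq IHr.
by apply/forallP=> i; case: (ts i).
Qed.

Variable M : structure L.

Section Substitution.
Variables (rho : const L -> nat) (B : nat) (e e' : nat -> M).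
Hypothesis agree : forall k, k < B -> e' k = e k.

Lemma eval_subst_const_term t :
  var_index t < B -> {in term_consts t, forall c, e' (rho c) = iconst M c} ->
  eval M e t = eval M e' (subst_const_term rho t).
Proof.
case: t => [x|c] /= ltxB rhoc; first by rewrite agree.
by rewrite rhoc ?mem_head.
Qed.

End Substitution.

Lemma sat_subst_consts rho B p (e e' : nat -> M) :
  max_var p < B -> (forall k, k < B -> e' k = e k) ->
  {in consts p, forall c, B <= rho c /\ e' (rho c) = iconst M c} ->
  sat M e p <-> sat M e' (subst_consts rho p).
Proof.
elim: p e e' => [t u|R ts|q IH|q IHq r IHr|x q IH] e e' /=;
  rewrite ?gtn_max => bound agree rhoc.
- case/andP: bound => ltB ltu.
  rewrite (eval_subst_const_term (rho := rho) agree ltB)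
          ?(eval_subst_const_term (rho := rho) agree ltu) //.
    by move=> c uc; apply: (rhoc c _).2; rewrite mem_cat uc orbT.
  by move=> c tc; apply: (rhoc c _).2; rewrite mem_cat tc.
- suff -> : (fun i => eval M e (ts i)) = (fun i => eval M e' (subst_const_term rho (ts i))).
    by [].
  apply/funext=> i; apply: (eval_subst_const_term (rho := rho) agree).
    by apply: leq_ltn_trans bound; apply: leq_bigmax.
  by move=> c tc; apply: (rhoc c _).2; apply/flatten_mapP; exists i; rewrite ?mem_enum.
- by have := IH e e' bound agree rhoc; tauto.
- case/andP: bound => ltq ltr.
  have sub_q : {subset consts q <= consts q ++ consts r} by move=> c cq; rewrite mem_cat cq.
  have sub_r : {subset consts r <= consts q ++ consts r} by move=> c cr; rewrite mem_cat cr orbT.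
  have := IHq e e' ltq agree (sub_in1 sub_q rhoc).
  have := IHr e e' ltr agree (sub_in1 sub_r rhoc); tauto.
- case/andP: bound => ltx ltq.
  have rhox c : c \in consts q -> rho c != x.
    by move=> cq; apply: contraTneq ltx => <-; rewrite -leqNgt; case: (rhoc c cq).
  have IHa a : sat M (upd e x a) q <-> sat M (upd e' x a) (subst_consts rho q).
    apply: IH => // [k ltk|c cq]; rewrite /upd; first by case: eqP => // _; apply: agree.
    by rewrite (negbTE (rhox c cq)); apply: rhoc.
  by split=> -[a /IHa Ha]; exists a.
Qed.

Lemma IP_in_const_free p xs : IP_in M p xs -> exists2 p', const_free p' & IP_in M p' xs.
Proof.
move=> [a [b ab]].
set B := (maxn (max_var p) (\max_(x <- xs) x)).+1.
set cs := consts p.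
pose rho (c : const L) := B + index (c : {classic const L}) cs.
pose b' I k := if B <= k then if onth cs (k - B) is Some c then iconst M c else b I k
               else b I k.
exists (subst_consts rho p); first exact: const_free_subst_consts.
exists a, b' => i I; rewrite -(ab i I); apply: iff_sym; apply: (sat_subst_consts (B:=B)).
- by rewrite ltnS leq_maxl.
- by move=> k ltk; rewrite /mix /b' leqNgt ltk.
move=> c c_cs; split; first exact: leq_addr.
have rhoNxs : rho c \notin xs.
  apply/negP=> /(leq_bigmax_seq (P := xpredT) (F := id))/(_ isT) le_rho.
  change (is_true (rho c <= \max_(x <- xs) x)) in le_rho.
  by move: le_rho; rewrite /rho /B; lia.
rewrite /mix (negbTE rhoNxs) /b' leq_addr addKn onthE (nth_map c) ?index_mem //.
by rewrite nth_index.
Qed.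

End ConstantElimination.

Lemma forall_inP_cons (A : Type) (P : A -> Prop) a s :
  (forall b, inP b (a :: s) -> P b) <-> P a /\ forall b, inP b s -> P b.
Proof.
split=> [H|[Pa Ps] b /= [->|/Ps] //].
by split=> [|b sb]; apply: H; [left|right].
Qed.

Lemma forall_inP_cat (A : Type) (P : A -> Prop) s1 s2 :
  (forall b, inP b (s1 ++ s2) -> P b) <->
  (forall b, inP b s1 -> P b) /\ (forall b, inP b s2 -> P b).
Proof.
elim: s1 => [|a s1 IH] /=; first by split=> [H|[]].
by rewrite !forall_inP_cons IH; tauto.
Qed.

Definition pair_of (A : Type) (x y : A) : 'I_2 -> A :=
  fun i => if val i == 0 then x else y.

Lemma pair_of_ord (A : Type) (f : 'I_2 -> A) : pair_of (f ord0) (f ord_max) = f.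
Proof. by apply/funext=> -[[|[|//]] lt_i2]; congr f; apply: val_inj. Qed.

Section SimpleProductSemantics.
Variables (L1 L2 : lang) (M : structure (Lsim L1 L2)).
Implicit Types (e : nat -> M) (p : formula (Lsim L1 L2)).

Lemma sat_exs e ys p :
  sat M e (exs L1 L2 ys p) <->
  exists e', (forall k, k \notin ys -> e' k = e k) /\ sat M e' p.
Proof.
elim: ys e => [|y ys IH] e /=.
  split=> [sat_e|[e' [ee']]]; first by exists e.
  by have -> : e' = e by apply/funext=> k; apply: ee'.
split=> [[a /IH[e' [ee' sat_e']]]|[e' [ee' sat_e']]].
  exists e'; split=> // k; rewrite inE negb_or => /andP[ky kys].
  by rewrite ee' // /upd (negbTE ky).
exists (e' y); apply/IH; exists e'; split=> // k kys; rewrite /upd.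
by case: eqP => [->//|/eqP ky]; rewrite ee' // inE negb_or ky.
Qed.

Lemma valid_alls ys p :
  (forall e, sat M e (alls L1 L2 ys p)) <-> forall e, sat M e p.
Proof. by elim: ys => //= y ys IH; apply: iff_trans (valid_FAll _ _ _) IH. Qed.

Definition rel1 (x y : M) := ipred M (Sim1 L1 L2 : psym (Lsim L1 L2)) (pair_of x y).
Definition rel2 (x y : M) := ipred M (Sim2 L1 L2 : psym (Lsim L1 L2)) (pair_of x y).

Lemma eval_pair_fun e t u :
  (fun i => eval M e (pair_fun L1 L2 t u i)) = pair_of (eval M e t) (eval M e u).
Proof. by apply/funext=> i; rewrite /pair_fun /pair_of; case: ifP. Qed.

Lemma sat_fsim1 e t u : sat M e (fsim1 L1 L2 t u) = rel1 (eval M e t) (eval M e u).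
Proof. by rewrite /= eval_pair_fun. Qed.

Lemma sat_fsim2 e t u : sat M e (fsim2 L1 L2 t u) = rel2 (eval M e t) (eval M e u).
Proof. by rewrite /= eval_pair_fun. Qed.

Lemma equiv_axiomsP s (r : M -> M -> Prop) :
  (forall e t u, sat M e (s t u) = r (eval M e t) (eval M e u)) ->
  (forall p, inP p (equiv_axioms L1 L2 s) -> forall e, sat M e p) <-> Equivalence r.
Proof.
move=> sat_s; rewrite /equiv_axioms !forall_inP_cons.
split=> [[/valid_FAll ax_refl [/valid_alls ax_sym [/valid_alls ax_trans _]]]|[refl sym trans]].
  split=> [x|x y|x y z].
  - by have := ax_refl (fun _ => x); rewrite sat_s.
  - by move: (ax_sym (nth x [:: x; y])) => /sat_FImp; rewrite !sat_s.
  - by move: (ax_trans (nth x [:: x; y; z])) => /sat_FImp; rewrite /= !sat_s => H ? ?; apply: H.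
split; first by apply/valid_FAll=> e; rewrite sat_s.
split; first by apply/valid_alls=> e; apply/sat_FImp; rewrite !sat_s; apply: sym.
split=> //; apply/valid_alls=> e; apply/sat_FImp; rewrite /= !sat_s => -[].
exact: trans.
Qed.

Definition Tx_semantics :=
  [/\ Equivalence rel1, Equivalence rel2,
      forall x y, rel1 x y -> rel2 x y -> x = y &
      forall x y, exists z, rel1 x z /\ rel2 y z].

Lemma Tx_axiomsP :
  (forall p, inP p (Tx_axioms L1 L2) -> forall e, sat M e p) <-> Tx_semantics.
Proof.
split=> [/forall_inP_cat[/(equiv_axiomsP sat_fsim1) eq1
          /forall_inP_cat[/(equiv_axiomsP sat_fsim2) eq2
          /forall_inP_cons[/valid_alls ax_inter /forall_inP_cons[/valid_alls ax_prod _]]]]|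
         [eq1 eq2 inter prod]].
  split=> // [x y r1 r2|x y].
    move: (ax_inter (nth x [:: x; y])) => /sat_FImp.
    by rewrite sat_FAnd sat_fsim1 sat_fsim2 /=; apply.
  have := ax_prod (nth x [:: x; y]); rewrite sat_FEx => -[z].
  by rewrite sat_FAnd sat_fsim1 sat_fsim2 => rxz; exists z.
apply/forall_inP_cat; split; first exact/(equiv_axiomsP sat_fsim1).
apply/forall_inP_cat; split; first exact/(equiv_axiomsP sat_fsim2).
apply/forall_inP_cons; split.
  apply/valid_alls=> e; apply/sat_FImp.
  by rewrite sat_FAnd sat_fsim1 sat_fsim2 => -[]; apply: inter.
apply/forall_inP_cons; split=> //; apply/valid_alls=> e; have [z [r1 r2]] := prod (e 0) (e 1).
by exists z; rewrite sat_FAnd sat_fsim1 sat_fsim2.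
Qed.

(* [m0] only pads the assignment built from [f] and [g]. *)
Lemma invarianceP s (r : M -> M -> Prop) (R : psym (Lsim L1 L2)) (m0 : M) :
  (forall e t u, sat M e (s t u) = r (eval M e t) (eval M e u)) ->
  (forall e, sat M e (invariance L1 L2 s R)) <->
  (forall f g : 'I_(arity R) -> M,
     (forall i, r (f i) (g i)) -> (ipred M R f <-> ipred M R g)).
Proof.
move=> sat_s; rewrite /invariance; set n := arity R.
split=> [/valid_alls valid f g fg|inv]; last first.
  apply/valid_alls=> e; apply/sat_FImp=> /sat_foldr_FAnd[_ rel]; apply/sat_FIff.
  by apply: inv => i; have := rel i; rewrite mem_iota /= ltn_ord sat_s => /(_ isT).
pose e k := if insub k is Some i then f i else if insub (k - n) is Some i then g i else m0.
have e_lo : (fun i : 'I_n => e i) = f by apply/funext=> i; rewrite /e valK.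
have e_hi : (fun i : 'I_n => e (n + i)) = g.
  by apply/funext=> i; rewrite /e insubF ?addKn ?valK // ltnNge leq_addr.
have prem : sat M e (foldr FAnd (FEq (v L1 L2 0) (v L1 L2 0))
                       [seq s (v L1 L2 i) (v L1 L2 (n + i)) | i <- iota 0 n]).
  apply/sat_foldr_FAnd; split=> // i; rewrite mem_iota /= => lt_in; rewrite sat_s /=.
  have := fg (Ordinal lt_in).
  by rewrite -[f]e_lo -[g]e_hi.
by move: (valid e) => /sat_FImp/(_ prem)/sat_FIff /=; rewrite e_lo e_hi.
Qed.

End SimpleProductSemantics.

Definition upd_block (A : Type) (e : nat -> A) (N0 : nat) n (f : 'I_n -> A) : nat -> A :=
  fun k => if N0 <= k then if insub (k - N0) is Some i then f i else e k else e k.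

Lemma upd_block_shift (A : Type) (e : nat -> A) N0 n (f : 'I_n -> A) (i : 'I_n) :
  upd_block e N0 f (N0 + i) = f i.
Proof. by rewrite /upd_block leq_addr addKn valK. Qed.

Lemma upd_block_out (A : Type) (e : nat -> A) N0 n (f : 'I_n -> A) k :
  k \notin [seq N0 + j | j <- iota 0 n] -> upd_block e N0 f k = e k.
Proof.
rewrite /upd_block => k_out; case: ifP => // le_N0k; case: insubP => // i lt_n _.
by case/negP: k_out; apply/mapP; exists (k - N0); rewrite ?mem_iota ?subnKC.
Qed.

Lemma sat_exs_block (L1 L2 : lang) (M : structure (Lsim L1 L2)) e N0 n p :
  sat M e (exs L1 L2 [seq N0 + j | j <- iota 0 n] p) <->
  exists f : 'I_n -> M, sat M (upd_block e N0 f) p.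
Proof.
rewrite sat_exs; split=> [[e' [ee' sat_e']]|[f sat_f]]; last first.
  by exists (upd_block e N0 f); split=> // k; apply: upd_block_out.
exists (fun i => e' (N0 + i)).
suff -> : upd_block e N0 (fun i : 'I_n => e' (N0 + i)) = e' by [].
apply/funext=> k; rewrite /upd_block; case: ifP => [le_N0k|lt_kN0].
  case: insubP => [i _ ->|lt_n]; first by rewrite subnKC.
  rewrite ee' //; apply/mapP=> -[j]; rewrite mem_iota /= => lt_jn eqk.
  by rewrite eqk addKn lt_jn in lt_n.
by rewrite ee' //; apply/mapP=> -[j _ eqk]; rewrite eqk leq_addr in lt_kN0.
Qed.

Section Conversion.
Variables L1 L2 L : lang.
Local Notation Ls := (Lsim L1 L2).
Variables (s : term (const Ls) -> term (const Ls) -> formula Ls)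
          (tr : term (const L) -> term (const Ls))
          (atom : forall R : psym L, ('I_(arity R) -> term (const Ls)) -> formula Ls).

Fixpoint conv (p : formula L) : formula Ls :=
  match p with
  | FEq t u => s (tr t) (tr u)
  | FAtom R ts =>
      let n := arity R in
      if [exists i, is_const (ts i)] then
        let N := (\max_(i < n) var_index (ts i)).+1 in
        exs L1 L2 [seq N + j | j <- iota 0 n]
          (foldr FAnd (@atom R (fun i : 'I_n => TVar (N + i)))
             [seq s (tr (ts i)) (TVar (N + i)) | i <- enum 'I_n])
      else @atom R (fun i : 'I_n => tr (ts i))
  | FNeg q => FNeg (conv q)
  | FAnd q r => FAnd (conv q) (conv r)
  | FEx x q => FEx x (conv q)
  end.

Variables (M : structure Ls) (N : structure L) (pi : M -> N).
Hypotheses (pi_surj : forall y, exists x, pi x = y)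
  (sat_s : forall e t u, sat M e (s t u) = (pi (eval M e t) = pi (eval M e u)))
  (sat_atom : forall e R ts, sat M e (@atom R ts) = ipred N R (fun i => pi (eval M e (ts i))))
  (eval_tr : forall e t, pi (eval M e (tr t)) = eval N (pi \o e) t).

Lemma sat_conv_atom R (ts : 'I_(arity R) -> term (const L)) e N0 :
  (forall i, var_index (ts i) < N0) ->
  sat M e (exs L1 L2 [seq N0 + j | j <- iota 0 (arity R)]
             (foldr FAnd (@atom R (fun i => TVar (N0 + i)))
                [seq s (tr (ts i)) (TVar (N0 + i)) | i <- enum 'I_(arity R)])) <->
  ipred N R (fun i => eval N (pi \o e) (ts i)).
Proof.
move=> lt_N0; rewrite sat_exs_block.
have eval_block (f : 'I_(arity R) -> M) i :
    pi (eval M (upd_block e N0 f) (tr (ts i))) = eval N (pi \o e) (ts i).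
  rewrite eval_tr; apply: (eval_agree (B := N0)) => // k lt_k /=.
  by rewrite /upd_block leqNgt lt_k.
split=> [[f /sat_foldr_FAnd[]]|Rts].
  rewrite sat_atom /= => Rf rel.
  have blockE : (fun i : 'I_(arity R) => pi (upd_block e N0 f (N0 + i))) = pi \o f.
    by apply/funext=> i; rewrite /= upd_block_shift.
  suff -> : (fun i => eval N (pi \o e) (ts i)) = pi \o f by rewrite -blockE.
  apply/funext=> i; rewrite -(eval_block f) /=.
  by have := rel i (mem_enum _ i); rewrite sat_s /= upd_block_shift.
exists (fun i => eval M e (tr (ts i))); apply/sat_foldr_FAnd; split.
  rewrite sat_atom /=; under eq_fun do rewrite upd_block_shift.
  by under eq_fun do rewrite eval_tr.
by move=> i _; rewrite sat_s /= upd_block_shift eval_block eval_tr.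
Qed.

Lemma sat_conv p e : sat M e (conv p) <-> sat N (pi \o e) p.
Proof.
elim: p e => [t u|R ts|q IH|q IHq r IHr|x q IH] e /=.
- by rewrite sat_s !eval_tr.
- case: ifP => _; last by rewrite sat_atom; under eq_fun do rewrite eval_tr.
  by apply: sat_conv_atom => i; rewrite ltnS (leq_bigmax i).
- by rewrite IH.
- by rewrite IHq IHr.
split=> [[a /IH]|[b /=]]; first by rewrite comp_upd; exists (pi a).
have [a <-] := pi_surj b; rewrite -comp_upd => /IH; by exists a.
Qed.

End Conversion.

Section Components.
Variables L1 L2 : lang.
Local Notation Ls := (Lsim L1 L2).

Lemma conv1E d p :
  conv1 L1 L2 d p = conv (fsim1 L1 L2) (tr1 L1 L2 d) (fun R => FAtom (SP1 L1 L2 R : psym Ls)) p.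
Proof. by elim: p => //= [q -> | q -> r -> | x q ->]. Qed.

Lemma conv2E d p :
  conv2 L1 L2 d p = conv (fsim2 L1 L2) (tr2 L1 L2 d) (fun R => FAtom (SP2 L1 L2 R : psym Ls)) p.
Proof. by elim: p => //= [q -> | q -> r -> | x q ->]. Qed.

Section Projections.
Variable M : structure Ls.

Lemma sat_conv1 d (N : structure L1) (pi : M -> N) :
  (forall y, exists x, pi x = y) ->
  (forall x y, rel1 x y <-> pi x = pi y) ->
  (forall R f, ipred M (SP1 L1 L2 R : psym Ls) f <-> ipred N R (pi \o f)) ->
  (forall c, pi (iconst M (c, d)) = iconst N c) ->
  forall p e, sat M e (conv1 L1 L2 d p) <-> sat N (pi \o e) p.
Proof.
move=> surj rel_pi pred_pi const_pi p e; rewrite conv1E.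
apply: sat_conv => // [e' t u|e' R ts|e' [x|c] //=].
  by rewrite sat_fsim1; apply/propext.
by apply/propext/pred_pi.
Qed.

Lemma sat_conv2 d (N : structure L2) (pi : M -> N) :
  (forall y, exists x, pi x = y) ->
  (forall x y, rel2 x y <-> pi x = pi y) ->
  (forall R f, ipred M (SP2 L1 L2 R : psym Ls) f <-> ipred N R (pi \o f)) ->
  (forall c, pi (iconst M (d, c)) = iconst N c) ->
  forall p e, sat M e (conv2 L1 L2 d p) <-> sat N (pi \o e) p.
Proof.
move=> surj rel_pi pred_pi const_pi p e; rewrite conv2E.
apply: sat_conv => // [e' t u|e' R ts|e' [x|c] //=].
  by rewrite sat_fsim2; apply/propext.
by apply/propext/pred_pi.
Qed.

End Projections.

Section Product.
Variables (M1 : structure L1) (M2 : structure L2).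

Definition product_ipred (R : sim_pred L1 L2) :
    ('I_(sim_arity L1 L2 R) -> M1 * M2) -> Prop :=
  match R as R0 return ('I_(sim_arity L1 L2 R0) -> M1 * M2) -> Prop with
  | SP1 R1 => fun f => ipred M1 R1 (fst \o f)
  | SP2 R2 => fun f => ipred M2 R2 (snd \o f)
  | Sim1 => fun f => (f ord0).1 = (f ord_max).1
  | Sim2 => fun f => (f ord0).2 = (f ord_max).2
  end.

Definition product_structure : structure Ls :=
  @Structure Ls (M1 * M2)%type (fun c => (iconst M1 c.1, iconst M2 c.2)) product_ipred.

Lemma sat_conv1_product d2 p (e : nat -> M1 * M2) :
  sat product_structure e (conv1 L1 L2 d2 p) <-> sat M1 (fst \o e) p.
Proof. by apply: sat_conv1 => // y; exists (y, iconst M2 d2). Qed.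

Lemma sat_conv2_product d1 p (e : nat -> M1 * M2) :
  sat product_structure e (conv2 L1 L2 d1 p) <-> sat M2 (snd \o e) p.
Proof. by apply: sat_conv2 => // y; exists (iconst M1 d1, y). Qed.

Lemma product_model d1 d2 T1 T2 :
  model_of M1 T1 -> model_of M2 T2 -> model_of product_structure (Tsim d1 d2 T1 T2).
Proof.
move=> M1T1 M2T2 p [|[[s [T1s ->]]|[[s [T2s ->]]|[[R ->]|[R ->]]]]] e.
- move: p e; apply/Tx_axiomsP; split.
  + by split=> [x|x y|x y z] //= ->.
  + by split=> [x|x y|x y z] //= ->.
  + by move=> [x1 x2] [y1 y2] /= -> ->.
  + by move=> [x1 x2] [y1 y2]; exists (x1, y2).
- by apply/sat_conv1_product; apply: M1T1.
- by apply/sat_conv2_product; apply: M2T2.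
- move: e; apply/(invarianceP _ (iconst product_structure (d1, d2)) (@sat_fsim1 _ _ _)).
  move=> f g fg /=.
  by rewrite (funext fg : fst \o f = fst \o g).
- move: e; apply/(invarianceP _ (iconst product_structure (d1, d2)) (@sat_fsim2 _ _ _)).
  move=> f g fg /=.
  by rewrite (funext fg : snd \o f = snd \o g).
Qed.

End Product.

Lemma IP_conv1 d1 d2 T1 T2 p xs :
  consistent T2 -> has_IP T1 p xs -> has_IP (Tsim d1 d2 T1 T2) (conv1 L1 L2 d2 p) xs.
Proof.
move=> [M2 M2T2] [M1 [M1T1 IP1]]; exists (product_structure M1 M2).
split; first exact: product_model.
apply: (IP_in_image (M' := product_structure M1 M2) (f := fun m => (m, iconst M2 d2)) _ IP1) => e.
exact: sat_conv1_product.
Qed.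

Lemma IP_conv2 d1 d2 T1 T2 p xs :
  consistent T1 -> has_IP T2 p xs -> has_IP (Tsim d1 d2 T1 T2) (conv2 L1 L2 d1 p) xs.
Proof.
move=> [M1 M1T1] [M2 [M2T2 IP2]]; exists (product_structure M1 M2).
split; first exact: product_model.
apply: (IP_in_image (M' := product_structure M1 M2) (f := fun m => (iconst M1 d1, m)) _ IP2) => e.
exact: sat_conv2_product.
Qed.

End Components.

Section Dnf.
Variables (L1 L2 : lang).

Definition dnf := seq (formula L1 * formula L2).

Definition FTrue {L : lang} : formula L := FEq (TVar 0) (TVar 0).

Fixpoint dnf_neg (l : dnf) : dnf :=
  match l with
  | [::] => [:: (FTrue, FTrue)]
  | pq :: l' => [seq (FAnd (FNeg pq.1) gh.1, gh.2) | gh <- dnf_neg l'] ++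
                [seq (gh.1, FAnd (FNeg pq.2) gh.2) | gh <- dnf_neg l']
  end.

Definition dnf_and (l l' : dnf) : dnf :=
  flatten [seq [seq (FAnd pq.1 gh.1, FAnd pq.2 gh.2) | gh <- l'] | pq <- l].

Definition dnf_ex x (l : dnf) : dnf := [seq (FEx x pq.1, FEx x pq.2) | pq <- l].

Variables (A1 : structure L1) (A2 : structure L2).
Implicit Type l : dnf.

Fixpoint sat_dnf (u1 : nat -> A1) (u2 : nat -> A2) l : Prop :=
  match l with
  | [::] => False
  | pq :: l' => (sat A1 u1 pq.1 /\ sat A2 u2 pq.2) \/ sat_dnf u1 u2 l'
  end.

Lemma sat_dnf_cat u1 u2 l l' : sat_dnf u1 u2 (l ++ l') <-> sat_dnf u1 u2 l \/ sat_dnf u1 u2 l'.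
Proof. by elim: l => [|pq l IH] /=; [tauto|rewrite IH; tauto]. Qed.

Lemma sat_dnf_neg u1 u2 l : sat_dnf u1 u2 (dnf_neg l) <-> ~ sat_dnf u1 u2 l.
Proof.
have sat_map1 a l' : sat_dnf u1 u2 [seq (FAnd a gh.1, gh.2) | gh <- l'] <->
                     sat A1 u1 a /\ sat_dnf u1 u2 l'.
  by elim: l' => [|gh l' IH] /=; [tauto|rewrite IH; tauto].
have sat_map2 a l' : sat_dnf u1 u2 [seq (gh.1, FAnd a gh.2) | gh <- l'] <->
                     sat A2 u2 a /\ sat_dnf u1 u2 l'.
  by elim: l' => [|gh l' IH] /=; [tauto|rewrite IH; tauto].
elim: l => [|pq l IH] /=; first tauto.
rewrite sat_dnf_cat sat_map1 sat_map2 IH /=.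
by have := EM (sat A1 u1 pq.1); tauto.
Qed.

Lemma sat_dnf_and u1 u2 l l' :
  sat_dnf u1 u2 (dnf_and l l') <-> sat_dnf u1 u2 l /\ sat_dnf u1 u2 l'.
Proof.
rewrite /dnf_and; elim: l => [|pq l IH] /=; first tauto.
have sat_map l'' : sat_dnf u1 u2 [seq (FAnd pq.1 gh.1, FAnd pq.2 gh.2) | gh <- l''] <->
    (sat A1 u1 pq.1 /\ sat A2 u2 pq.2) /\ sat_dnf u1 u2 l''.
  by elim: l'' => [|gh l'' IH'] /=; [tauto|rewrite IH'; tauto].
by rewrite sat_dnf_cat IH sat_map; tauto.
Qed.

Lemma sat_dnf_ex u1 u2 x l :
  sat_dnf u1 u2 (dnf_ex x l) <-> exists a1 a2, sat_dnf (upd u1 x a1) (upd u2 x a2) l.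
Proof.
elim: l => [|pq l IH] /=; first by split=> // -[? []].
rewrite IH; split=> [[[[a1 H1] [a2 H2]]|[a1 [a2 H]]]|[a1 [a2 [[H1 H2]|H]]]].
- by exists a1, a2; left.
- by exists a1, a2; right.
- by left; split; [exists a1|exists a2].
- by right; exists a1, a2.
Qed.

Lemma infinite_VC_dnf (X : Type) (u1 : nat -> X -> nat -> A1) (u2 : nat -> X -> nat -> A2) l :
  infinite_VC (fun s x => sat_dnf (u1 s x) (u2 s x) l) ->
  (exists p1, infinite_VC (fun s x => sat A1 (u1 s x) p1)) \/
  (exists p2, infinite_VC (fun s x => sat A2 (u2 s x) p2)).
Proof.
elim: l => [/not_infinite_VC_False //|pq l IH] /infinite_VC_combine[/infinite_VC_combine[]|//].
  by left; exists pq.1.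
by right; exists pq.2.
Qed.

End Dnf.

Section FefermanVaught.
Variables L1 L2 : lang.
Local Notation Ls := (Lsim L1 L2).

Definition proj1_term (t : term (const Ls)) : term (const L1) :=
  match t with TVar x => TVar x | TConst c => TConst c.1 end.
Definition proj2_term (t : term (const Ls)) : term (const L2) :=
  match t with TVar x => TVar x | TConst c => TConst c.2 end.

Definition decompose_atom (R : sim_pred L1 L2) :
    ('I_(sim_arity L1 L2 R) -> term (const Ls)) -> dnf L1 L2 :=
  match R as R0 return ('I_(sim_arity L1 L2 R0) -> term (const Ls)) -> dnf L1 L2 with
  | SP1 R1 => fun ts => [:: (FAtom R1 (proj1_term \o ts), FTrue)]
  | SP2 R2 => fun ts => [:: (FTrue, FAtom R2 (proj2_term \o ts))]
  | Sim1 => fun ts => [:: (FEq (proj1_term (ts ord0)) (proj1_term (ts ord_max)), FTrue)]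
  | Sim2 => fun ts => [:: (FTrue, FEq (proj2_term (ts ord0)) (proj2_term (ts ord_max)))]
  end.

(* Only sound on constant-free formulas: C_(c1,c2) need not be ~1-equivalent to C_(c1,d2),
   the interpretation of c1 in M/~1. *)
Fixpoint decompose (p : formula Ls) : dnf L1 L2 :=
  match p with
  | FEq t u => [:: (FEq (proj1_term t) (proj1_term u), FEq (proj2_term t) (proj2_term u))]
  | FAtom R ts => @decompose_atom R ts
  | FNeg q => dnf_neg (decompose q)
  | FAnd q r => dnf_and (decompose q) (decompose r)
  | FEx x q => dnf_ex x (decompose q)
  end.

Variables (M : structure Ls) (A1 : structure L1) (A2 : structure L2).
Variables (pi1 : M -> A1) (pi2 : M -> A2).
Hypotheses (pi_pair : forall a1 a2, exists m, pi1 m = a1 /\ pi2 m = a2)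
  (pi_inj : forall x y, pi1 x = pi1 y -> pi2 x = pi2 y -> x = y)
  (rel1_pi : forall x y, rel1 x y <-> pi1 x = pi1 y)
  (rel2_pi : forall x y, rel2 x y <-> pi2 x = pi2 y)
  (ipred1_pi : forall R f, ipred M (SP1 L1 L2 R : psym Ls) f <-> ipred A1 R (pi1 \o f))
  (ipred2_pi : forall R f, ipred M (SP2 L1 L2 R : psym Ls) f <-> ipred A2 R (pi2 \o f)).

Lemma eval_proj1_term e t :
  ~~ is_const t -> eval A1 (pi1 \o e) (proj1_term t) = pi1 (eval M e t).
Proof. by case: t. Qed.

Lemma eval_proj2_term e t :
  ~~ is_const t -> eval A2 (pi2 \o e) (proj2_term t) = pi2 (eval M e t).
Proof. by case: t. Qed.

Lemma sat_decompose_atom e (R : sim_pred L1 L2) ts :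
  (forall i, ~~ is_const (ts i)) ->
  sat M e (FAtom (R : psym Ls) ts) <-> sat_dnf (pi1 \o e) (pi2 \o e) (@decompose_atom R ts).
Proof.
move=> vars; have E1 : pi1 \o (fun i => eval M e (ts i)) =
                      (fun i => eval A1 (pi1 \o e) (proj1_term (ts i))).
  by apply/funext=> i; rewrite /= eval_proj1_term.
have E2 : pi2 \o (fun i => eval M e (ts i)) =
          (fun i => eval A2 (pi2 \o e) (proj2_term (ts i))).
  by apply/funext=> i; rewrite /= eval_proj2_term.
case: R ts vars E1 E2 => [R1|R2||] ts vars E1 E2 /=.
- move: (ipred1_pi (R := R1) (fun i => eval M e (ts i))); rewrite E1.
  by case=> H1 H2; split=> [/H1 ?|[[/H2 //]|[]]]; left.
- move: (ipred2_pi (R := R2) (fun i => eval M e (ts i))); rewrite E2.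
  by case=> H1 H2; split=> [/H1 ?|[[_ /H2 //]|[]]]; left.
- rewrite -[X in ipred _ _ X]pair_of_ord -/(rel1 _ _) rel1_pi !eval_proj1_term //.
  by split=> [?|[[? _]|[]]]; [left|].
- rewrite -[X in ipred _ _ X]pair_of_ord -/(rel2 _ _) rel2_pi !eval_proj2_term //.
  by split=> [?|[[_ ?]|[]]]; [left|].
Qed.

Lemma sat_decompose p e :
  const_free p -> sat M e p <-> sat_dnf (pi1 \o e) (pi2 \o e) (decompose p).
Proof.
elim: p e => [t u|R ts|q IH|q IHq r IHr|x q IH] e /=.
- case/andP=> t_var u_var; rewrite !eval_proj1_term // !eval_proj2_term //.
  by split=> [->|[[eq1 eq2]|[]]]; [left|apply: pi_inj].
- by move/forallP; apply: sat_decompose_atom.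
- move=> /(IH e) {}IH.
  by have := sat_dnf_neg (pi1 \o e) (pi2 \o e) (decompose q); tauto.
- case/andP=> /(IHq e) {}IHq /(IHr e) {}IHr.
  by have := sat_dnf_and (pi1 \o e) (pi2 \o e) (decompose q) (decompose r); tauto.
move=> q_cf; rewrite sat_dnf_ex; split=> [[m /IH]|[a1 [a2]]].
  by rewrite comp_upd comp_upd => /(_ q_cf) ?; exists (pi1 m), (pi2 m).
have [m [<- <-]] := pi_pair a1 a2; rewrite -!comp_upd => /IH sat_m.
by exists m; apply: sat_m.
Qed.

End FefermanVaught.

Section ModelDecomposition.
Variables (L1 L2 : lang) (d1 : const L1) (d2 : const L2).
Variables (T1 : theory L1) (T2 : theory L2) (M : structure (Lsim L1 L2)).
Hypothesis M_model : model_of M (Tsim d1 d2 T1 T2).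
Local Notation Ls := (Lsim L1 L2).

Lemma Tsim_Tx : Tx_semantics M.
Proof. by apply/Tx_axiomsP=> p Tx_p e; apply: M_model; left. Qed.

Lemma rel1_equiv : Equivalence (@rel1 _ _ M). Proof. by case: Tsim_Tx. Qed.
Lemma rel2_equiv : Equivalence (@rel2 _ _ M). Proof. by case: Tsim_Tx. Qed.

Lemma Tsim_invariance1 (R : psym L1) (f g : 'I_(arity R) -> M) :
  (forall i, rel1 (f i) (g i)) ->
  ipred M (SP1 L1 L2 R : psym Ls) f <-> ipred M (SP1 L1 L2 R : psym Ls) g.
Proof.
move: f g; apply: (invarianceP (SP1 L1 L2 R : psym Ls) (iconst M (d1, d2))
                             (@sat_fsim1 _ _ M)).1 => e.
by apply: M_model; right; right; right; left; exists R.
Qed.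

Lemma Tsim_invariance2 (R : psym L2) (f g : 'I_(arity R) -> M) :
  (forall i, rel2 (f i) (g i)) ->
  ipred M (SP2 L1 L2 R : psym Ls) f <-> ipred M (SP2 L1 L2 R : psym Ls) g.
Proof.
move: f g; apply: (invarianceP (SP2 L1 L2 R : psym Ls) (iconst M (d1, d2))
                             (@sat_fsim2 _ _ M)).1 => e.
by apply: M_model; right; right; right; right; exists R.
Qed.

Definition component1 : structure L1 :=
  quotient_structure (@rel1 _ _ M) (fun c => iconst M (c, d2))
    (fun R => ipred M (SP1 L1 L2 R : psym Ls)).

Definition component2 : structure L2 :=
  quotient_structure (@rel2 _ _ M) (fun c => iconst M (d1, c))
    (fun R => ipred M (SP2 L1 L2 R : psym Ls)).

Definition pi1 : M -> component1 := cls (@rel1 _ _ M).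
Definition pi2 : M -> component2 := cls (@rel2 _ _ M).

Lemma ipred_component1 R f : ipred M (SP1 L1 L2 R : psym Ls) f <-> ipred component1 R (pi1 \o f).
Proof.
apply: iff_sym; apply: (quotient_ipred rel1_equiv) => g h gh.
exact: (Tsim_invariance1 gh).1.
Qed.

Lemma ipred_component2 R f : ipred M (SP2 L1 L2 R : psym Ls) f <-> ipred component2 R (pi2 \o f).
Proof.
apply: iff_sym; apply: (quotient_ipred rel2_equiv) => g h gh.
exact: (Tsim_invariance2 gh).1.
Qed.

Lemma rel1_pi1 x y : rel1 x y <-> pi1 x = pi1 y.
Proof. exact: iff_sym (eq_cls rel1_equiv x y). Qed.

Lemma rel2_pi2 x y : rel2 x y <-> pi2 x = pi2 y.
Proof. exact: iff_sym (eq_cls rel2_equiv x y). Qed.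

Lemma component1_model : model_of component1 T1.
Proof.
move=> s T1s e; rewrite -[e](funext (fun k => cls_rep (e k))).
apply/(sat_conv1 (d := d2) _ rel1_pi1 ipred_component1) => //.
  by move=> y; exists (rep y); apply: cls_rep.
by apply: M_model; right; left; exists s.
Qed.

Lemma component2_model : model_of component2 T2.
Proof.
move=> s T2s e; rewrite -[e](funext (fun k => cls_rep (e k))).
apply/(sat_conv2 (d := d1) _ rel2_pi2 ipred_component2) => //.
  by move=> y; exists (rep y); apply: cls_rep.
by apply: M_model; right; right; left; exists s.
Qed.

Lemma pi_pair a1 a2 : exists m, pi1 m = a1 /\ pi2 m = a2.
Proof.
rewrite -(cls_rep a1) -(cls_rep a2); case: Tsim_Tx => _ _ _ /(_ (rep a1) (rep a2))[m [r1 r2]].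
by exists m; split; apply/esym; [apply/rel1_pi1|apply/rel2_pi2].
Qed.

Lemma pi_inj x y : pi1 x = pi1 y -> pi2 x = pi2 y -> x = y.
Proof. by case: Tsim_Tx => _ _ inter _ /rel1_pi1 r1 /rel2_pi2; apply: inter. Qed.

Lemma sat_decompose_components p e : const_free p ->
  sat M e p <-> sat_dnf (pi1 \o e) (pi2 \o e) (decompose p).
Proof.
apply: sat_decompose; [exact: pi_pair|exact: pi_inj|exact: rel1_pi1|exact: rel2_pi2|..].
  exact: ipred_component1.
exact: ipred_component2.
Qed.

Lemma IP_in_Tsim_model p xs :
  IP_in M p xs -> (exists p1, has_IP T1 p1 xs) \/ (exists p2, has_IP T2 p2 xs).
Proof.
case/IP_in_const_free=> p' p'_cf [a [b ab]].
have := IP_in_infinite_VC ab.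
move=> /(infinite_VC_ext (fun s I => sat_decompose_components _ p'_cf)).
case/infinite_VC_dnf=> [[p1 VC1]|[p2 VC2]]; [left; exists p1|right; exists p2].
  apply: (infinite_VC_has_IP (a := fun s => pi1 \o a s) (b := fun I => pi1 \o b I)
           component1_model).
  by apply: infinite_VC_ext VC1 => s I; rewrite comp_mix.
apply: (infinite_VC_has_IP (a := fun s => pi2 \o a s) (b := fun I => pi2 \o b I)
         component2_model).
by apply: infinite_VC_ext VC2 => s I; rewrite comp_mix.
Qed.

End ModelDecomposition.

Theorem theorem3p2 (L1 L2 : lang) (d1 : const L1) (d2 : const L2)
  (T1 : theory L1) (T2 : theory L2) :
  (forall s, T1 s -> sentence s) -> (forall s, T2 s -> sentence s) ->
  consistent T1 -> consistent T2 ->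
  (NIP (Tsim d1 d2 T1 T2) <-> NIP T1 /\ NIP T2).
Proof.
move=> _ _ T1_cons T2_cons; split=> [NIPsim|[NIP1 NIP2] p xs [M [M_model IP]]].
  split=> p xs IP; first exact: NIPsim _ xs (IP_conv1 d1 d2 T2_cons IP).
  exact: NIPsim _ xs (IP_conv2 d1 d2 T1_cons IP).
by case: (IP_in_Tsim_model M_model IP) => [[p1]|[p2]]; [apply: NIP1|apply: NIP2].
Qed.
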